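(* Let $n\ge1$ and let $R$ be a plane tree with $n+1$ internal nodes and $n+1$ leaves in which every internal node has a leaf as its first (leftmost) child, equipped with an integer labeling $\ell$ of its leaves. Then $(R,\ell)$ is a decorated tree if and only if $\mathrm{Ctr}(R)$ is a sticky tree. Consequently $\mathrm{Ctr}$ is a bijection from $\mathcal{RS}_n$ to $\mathcal{S}_n$.
   Context: Plane trees: a plane tree is a rooted tree in which the children of every node are linearly ordered (left to right); the root has depth $0$, a child of a node of depth $d$ has depth $d+1$; a leaf is a node without children, an internal node is a node with at least one child. The prefix order is: the root, followed by the prefix order of the subtree of its leftmost child, then of its second child, and so on. $R_u$ (or $S_u$) denotes the subtree rooted at $u$. Sticky trees: a sticky tree is a plane tree $S$ with node set $V$ and a labeling $\ell:V\to\mathbb{N}$ such that: (1) every node $u$ of depth $d$ has $0\le\ell(u)\le d$; (2) every node $u$ of depth $d>0$ has some $v\in S_u$ (possibly $v=u$) with $\ell(v)<d$; (3) for every node $u$ of depth $d$, if some $v\in S_u$ has $\ell(v)=d$, then every node of $S_u$ (including $u$) preceding $v$ in prefix order has label at least $d$. $\mathcal{S}_n$ is the set of sticky trees with $n$ edges. Decorated trees: a decorated tree is a plane tree $R$ with an integer labeling $\ell$ defined only on its leaves such that: (1') for every leaf $f$ whose parent has depth $d$, $-1\le\ell(f)\le d-1$; (2') every internal node $u$ of depth $d>0$ has a descendant leaf $f$ with $\ell(f)<d-1$; (3') for every node $t$ of depth $d$ and every child $u$ of $t$, if some leaf $f$ of $R_u$ has $\ell(f)=d$, then every leaf of $R_u$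 preceding $f$ in prefix order has label at least $d$. $\mathcal{RS}_n$ is the set of decorated trees with $n+1$ internal nodes and $n+1$ leaves in which every internal node has a leaf as its first child. The map $\mathrm{Ctr}$: for $R$ as in the claim (so each leaf is the first child of its parent and leaves are in bijection with internal nodes), $\mathrm{Ctr}(R)$ is the plane tree obtained by deleting all leaves of $R$, where each remaining (formerly internal) node $w$ receives the label $\ell(f)+1$, $f$ being the leaf that was the first child of $w$. *)

From HB Require Import structures.
From mathcomp Require Import all_boot all_order all_algebra.
From Stdlib Require List.
Set Implicit Arguments. Unset Strict Implicit. Unset Printing Implicit Defensive.
Import Order.TTheory GRing.Theory Num.Theory.
Local Open Scope ring_scope.

Inductive dtree := DLeaf of int | DNode of seq dtree.

(* ---------- Plane trees with a label on every node (for sticky trees) ----------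
   Labels are taken in int; condition (1) of sticky trees forces them to be >= 0,
   i.e. natural numbers. *)
Inductive stree := SNode of int & seq stree.

Definition dchildren (t : dtree) : seq dtree := if t is DNode ts then ts else [::].

Fixpoint dnodes (d : nat) (t : dtree) : seq (nat * dtree) :=
  match t with
  | DLeaf _ => [:: (d, t)]
  | DNode ts => (d, t) :: flatten (map (dnodes d.+1) ts)
  end.

Fixpoint dleaves (t : dtree) : seq int :=
  match t with
  | DLeaf z => [:: z]
  | DNode ts => flatten (map dleaves ts)
  end.

Definition is_internal (t : dtree) : bool := if t is DNode _ then true else false.

Definition n_internal (R : dtree) : nat := count (fun p => is_internal p.2) (dnodes 0 R).
Definition n_leaves (R : dtree) : nat := size (dleaves R).

Definition first_child_leaf (R : dtree) : Prop :=
  forall d t, List.In (d, t) (dnodes 0 R) ->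
    match t with
    | DNode (DLeaf _ :: _) => True
    | DNode _ => False
    | DLeaf _ => True
    end.

Definition prefix_cond (s : seq int) (d : int) : Prop :=
  forall i j, (j < i)%N -> (i < size s)%N -> nth 0 s i = d -> d <= nth 0 s j.

Definition decorated (R : dtree) : Prop :=
  (forall d t, List.In (d, t) (dnodes 0 R) ->
     forall z, List.In (DLeaf z) (dchildren t) -> (-1 <= z) && (z <= d%:Z - 1)) /\
  (forall d ts, List.In (d, DNode ts) (dnodes 0 R) -> (0 < d)%N ->
     has (fun z => z < d%:Z - 1) (dleaves (DNode ts))) /\
  (forall d t, List.In (d, t) (dnodes 0 R) ->
     forall u, List.In u (dchildren t) -> prefix_cond (dleaves u) d%:Z).

Definition in_RS (n : nat) (R : dtree) : Prop :=
  [/\ first_child_leaf R, n_internal R = n.+1, n_leaves R = n.+1 & decorated R].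

Fixpoint snodes (d : nat) (t : stree) : seq (nat * stree) :=
  match t with
  | SNode _ ts => (d, t) :: flatten (map (snodes d.+1) ts)
  end.

Fixpoint slabels (t : stree) : seq int :=
  match t with
  | SNode l ts => l :: flatten (map slabels ts)
  end.

Definition slabel (t : stree) : int := let: SNode l _ := t in l.

Definition n_edges (S : stree) : nat := (size (snodes 0 S)).-1.

Definition sticky (S : stree) : Prop :=
  (forall d u, List.In (d, u) (snodes 0 S) -> (0 <= slabel u) && (slabel u <= d%:Z)) /\
  (forall d u, List.In (d, u) (snodes 0 S) -> (0 < d)%N ->
     has (fun l => l < d%:Z) (slabels u)) /\
  (forall d u, List.In (d, u) (snodes 0 S) -> prefix_cond (slabels u) d%:Z).

Definition in_S (n : nat) (S : stree) : Prop := sticky S /\ n_edges S = n.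

(* On inputs outside the intended domain (a leaf, or an
   internal node whose first child is not a leaf) some arbitrary value is returned. *)
Fixpoint ctr (t : dtree) : stree :=
  match t with
  | DLeaf z => SNode (z + 1) [::]
  | DNode ts =>
      match ts with
      | DLeaf z :: rest => SNode (z + 1) (map ctr rest)
      | _ => SNode 0 (map ctr ts)
      end
  end.

(* [ctr] has an explicit inverse [unctr], which gives every node a new leftmost
   leaf child labelled one less than the node.  If every internal node of R has
   a leaf as first child, R has at least as many leaves as internal nodes, with
   equality exactly when these first children are all its leaves, i.e. when
   R = unctr (ctr R).  Along [unctr] the leaf labels of a subtree are its node
   labels decreased by one, so conditions (1'), (2'), (3') at a node of depth d
   become (1), (2), (3); the only instance of (3) not covered by (3') is the one
   at the root, and it follows from (1). *)

From HB Require Import structures.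
From mathcomp Require Import all_boot all_order all_algebra zify.
Set Implicit Arguments. Unset Strict Implicit. Unset Printing Implicit Defensive.
Import Order.TTheory GRing.Theory Num.Theory.
Local Open Scope ring_scope.

Lemma In_nth (T : Type) (x0 : T) s i : (i < size s)%N -> List.In (nth x0 s i) s.
Proof.
elim: s i => [|x s IH] [|i] //= lt_i_s; [by left | by right; apply: IH].
Qed.

Lemma In_flatten_map (A T : Type) (f : A -> seq T) x ts :
  List.In x (flatten (map f ts)) <-> exists2 t, List.In t ts & List.In x (f t).
Proof.
elim: ts => [|t ts IH] /=; first by split=> // -[].
rewrite List.in_app_iff IH; split.
- by case=> [xt|[u]]; [exists t; first left | exists u; first right].
- by case=> u [<-|uts] xu; [left | right; exists u].
Qed.

Lemma eq_map_In (A B : Type) (f g : A -> B) s :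
  (forall x, List.In x s -> f x = g x) -> map f s = map g s.
Proof. exact: List.map_ext_in. Qed.

Lemma leq_sumn_map (A : Type) (f g : A -> nat) s :
  (forall x, List.In x s -> (f x <= g x)%N) ->
  (sumn (map f s) <= sumn (map g s))%N /\
  (sumn (map f s) = sumn (map g s) -> forall x, List.In x s -> f x = g x).
Proof.
elim: s => [|a s IH] le_fg /=; first by split=> // _ x [].
have [le_sum eq_sum] := IH (fun x xs => le_fg x (or_intror xs)).
have le_a := le_fg a (or_introl erefl).
split=> [|E x [<-|xs]]; [lia | lia | apply: eq_sum => //; lia].
Qed.

Lemma dtree_ind_In (P : dtree -> Prop) :
  (forall z, P (DLeaf z)) ->
  (forall ts, (forall t, List.In t ts -> P t) -> P (DNode ts)) ->
  forall t, P t.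
Proof.
move=> Pleaf Pnode; fix IH 1 => -[z|ts]; first exact: Pleaf.
apply: Pnode; elim: ts => [|c cs IHcs] t; first by case.
by case=> [<-|/IHcs]; first exact: IH.
Qed.

Lemma stree_ind_In (P : stree -> Prop) :
  (forall l ts, (forall t, List.In t ts -> P t) -> P (SNode l ts)) ->
  forall t, P t.
Proof.
move=> Pnode; fix IH 1 => -[l ts]; apply: Pnode.
elim: ts => [|c cs IHcs] t; first by case.
by case=> [<-|/IHcs]; first exact: IH.
Qed.

Definition schildren (t : stree) : seq stree := let: SNode _ ts := t in ts.

Fixpoint ninternal (t : dtree) : nat :=
  if t is DNode ts then (sumn (map ninternal ts)).+1 else 0.

Fixpoint stree_size (t : stree) : nat :=
  let: SNode _ ts := t in (sumn (map stree_size ts)).+1.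

Lemma count_internal_dnodes d t :
  count (fun p => is_internal p.2) (dnodes d t) = ninternal t.
Proof.
elim/dtree_ind_In: t d => [z|ts IH] d //=.
rewrite count_flatten -map_comp; congr (sumn _).+1.
by apply: eq_map_In => t tts; apply: IH.
Qed.

Lemma n_internalE R : n_internal R = ninternal R.
Proof. exact: count_internal_dnodes. Qed.

Lemma size_snodes d s : size (snodes d s) = stree_size s.
Proof.
elim/stree_ind_In: s d => l ts IH d /=.
rewrite size_flatten /shape -map_comp; congr (sumn _).+1.
by apply: eq_map_In => t tts; apply: IH.
Qed.

Lemma size_slabels s : size (slabels s) = stree_size s.
Proof.
elim/stree_ind_In: s => l ts IH /=.
by rewrite size_flatten /shape -map_comp; congr (sumn _).+1; apply: eq_map_In.
Qed.

Fixpoint unctr (s : stree) : dtree :=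
  let: SNode l ts := s in DNode (DLeaf (l - 1) :: map unctr ts).

Lemma unctrK : cancel unctr ctr.
Proof.
elim/stree_ind_In => l ts IH /=; rewrite subrK -map_comp.
by congr SNode; rewrite -[RHS]map_id; apply: eq_map_In.
Qed.

Lemma dleaves_unctr s : dleaves (unctr s) = map (fun x => x - 1) (slabels s).
Proof.
elim/stree_ind_In: s => l ts IH /=; congr cons.
by rewrite map_flatten -!map_comp; congr flatten; apply: eq_map_In.
Qed.

Lemma ninternal_unctr s : ninternal (unctr s) = stree_size s.
Proof.
elim/stree_ind_In: s => l ts IH /=.
by rewrite -map_comp; congr (sumn _).+1; apply: eq_map_In.
Qed.

Lemma size_dleaves_unctr s : size (dleaves (unctr s)) = stree_size s.
Proof. by rewrite dleaves_unctr size_map size_slabels. Qed.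

Lemma dnodes_unctr_inv s d e t : List.In (e, t) (dnodes d (unctr s)) ->
  (exists2 u, List.In (e, u) (snodes d s) & t = unctr u) \/ exists z, t = DLeaf z.
Proof.
elim/stree_ind_In: s d => l ts IH d /=.
case=> [[-> <-]|[[_ <-]|]].
- by left; exists (SNode l ts); first left.
- by right; exists (l - 1).
- rewrite -map_comp => /In_flatten_map [c cts /(IH c cts d.+1) [[u eu ->]|]].
    by left; exists u => //; right; apply/In_flatten_map; exists c.
  by right.
Qed.

Lemma In_dnodes_unctr s d e u :
  List.In (e, u) (snodes d s) -> List.In (e, unctr u) (dnodes d (unctr s)).
Proof.
elim/stree_ind_In: s d => l ts IH d /= [[-> <-]|]; first by left.
move=> /In_flatten_map [c cts eu]; right; right.
by rewrite -map_comp; apply/In_flatten_map; exists c => //; apply: IH.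
Qed.

Lemma In_snodes_child s d e u w : List.In (e, u) (snodes d s) ->
  List.In w (schildren u) -> List.In (e.+1, w) (snodes d s).
Proof.
elim/stree_ind_In: s d => l ts IH d /= [[-> <-] wts|/In_flatten_map [c cts eu] wu].
  by right; apply/In_flatten_map; exists w => //; case: w {wts IH}; left.
by right; apply/In_flatten_map; exists c => //; apply: IH eu wu.
Qed.

Lemma snodes_rootVchild s d e w : List.In (e, w) (snodes d s) ->
  (e = d /\ w = s) \/
  exists e' u, [/\ e = e'.+1, List.In (e', u) (snodes d s) & List.In w (schildren u)].
Proof.
elim/stree_ind_In: s d => l ts IH d /= [[-> <-]|]; first by left.
move=> /In_flatten_map [c cts /(IH c cts d.+1) [[-> ->]|[e' [u [-> eu wu]]]]]; right.
  by exists d, (SNode l ts); split=> //; left.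
by exists e', u; split=> //; right; apply/In_flatten_map; exists c.
Qed.

Lemma In_slabels_snodes s d x : List.In x (slabels s) ->
  exists e u, List.In (e, u) (snodes d s) /\ slabel u = x.
Proof.
elim/stree_ind_In: s d => l ts IH d /= [<-|].
  by exists d, (SNode l ts); split=> //; left.
move=> /In_flatten_map [c cts /(IH c cts d.+1) [e [u [eu <-]]]].
by exists e, u; split=> //; right; apply/In_flatten_map; exists c.
Qed.

Definition leaf_first (t : dtree) : Prop :=
  match t with DNode (DLeaf _ :: _) | DLeaf _ => True | DNode _ => False end.

Lemma ninternal_leq_leaves d R :
  (forall e t, List.In (e, t) (dnodes d R) -> leaf_first t) ->
  (ninternal R <= size (dleaves R))%N /\
  (ninternal R = size (dleaves R) -> unctr (ctr R) = R).
Proof.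
elim/dtree_ind_In: R d => [z|ts IH] d lf //.
have := lf d (DNode ts) (or_introl erefl).
case: ts IH lf => [|[z|ts'] cs] IH lf //= _.
have IHc c : List.In c cs -> (ninternal c <= size (dleaves c))%N /\
                             (ninternal c = size (dleaves c) -> unctr (ctr c) = c).
  move=> ccs; apply: (IH c (or_intror ccs) d.+1) => e t et; apply: (lf e t).
  by right; apply/In_flatten_map; exists c => //; right.
have [le_sum eq_sum] := leq_sumn_map (fun c ccs => (IHc c ccs).1).
rewrite size_flatten /shape -map_comp /comp; split=> [|E]; first lia.
rewrite addrK -map_comp; congr (DNode (_ :: _)); rewrite -[RHS]map_id.
by apply: eq_map_In => c ccs; apply: (IHc c ccs).2; apply: eq_sum => //; lia.
Qed.

Lemma unctr_ctr R :
  first_child_leaf R -> n_internal R = n_leaves R -> unctr (ctr R) = R.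
Proof. by rewrite n_internalE => lf; apply: (ninternal_leq_leaves lf).2. Qed.

Lemma first_child_leaf_unctr s : first_child_leaf (unctr s).
Proof. by move=> d t /dnodes_unctr_inv [[[l ts] _ ->]|[z ->]]. Qed.

Lemma prefix_cond_subr s d c :
  prefix_cond (map (fun x => x - c) s) d <-> prefix_cond s (d + c).
Proof.
rewrite /prefix_cond size_map; split=> H i j ji iS; have jS := ltn_trans ji iS;
  move: (H i j ji iS); rewrite !(nth_map 0) //.
- by move=> Hd Hi; rewrite -lerBrDr; apply: Hd; rewrite Hi addrK.
- by move=> Hd Hi; rewrite lerBrDr; apply: Hd; rewrite -Hi subrK.
Qed.

Lemma label_boundsB1 (l : int) (d : nat) :
  (-1 <= l - 1) && (l - 1 <= d%:Z - 1) = (0 <= l) && (l <= d%:Z).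
Proof. by rewrite lerBrDr lerBlDr subrK addNr. Qed.

Lemma sticky_of_decorated_unctr S : decorated (unctr S) -> sticky S.
Proof.
case=> [dec1 [dec2 dec3]].
have st1 d u : List.In (d, u) (snodes 0 S) -> (0 <= slabel u) && (slabel u <= d%:Z).
  case: u => l ts /In_dnodes_unctr /dec1 /(_ (l - 1) (or_introl erefl)).
  by rewrite label_boundsB1.
split=> //; split=> [d [l ts] /In_dnodes_unctr du dpos|d w].
  move: (dec2 _ _ du dpos); rewrite -/(unctr (SNode l ts)) dleaves_unctr has_map.
  by apply: sub_has => x /=; rewrite ltrD2r.
case/snodes_rootVchild => [[-> ->]|[e [[l ts] [-> eu wts]]]].
  move=> i j ji iS _; have jS := ltn_trans ji iS.
  have [e [u [eu <-]]] := In_slabels_snodes 0 (In_nth 0 jS).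
  by case/andP: (st1 _ _ eu).
have := dec3 _ _ (In_dnodes_unctr eu) (unctr w)
  (or_intror (List.in_map unctr _ _ wts)).
by rewrite dleaves_unctr prefix_cond_subr -PoszD addn1.
Qed.

Lemma decorated_unctr_of_sticky S : sticky S -> decorated (unctr S).
Proof.
case=> [st1 [st2 st3]]; split; [|split].
- move=> d t /dnodes_unctr_inv [[[l ts] lts ->]|[z ->]] // x /=.
  case=> [[<-]|/List.in_map_iff [[l' ts'] [//]]].
  by rewrite label_boundsB1; apply: st1 lts.
- move=> d ts /dnodes_unctr_inv [[u du ->]|[z //]] dpos.
  rewrite dleaves_unctr has_map; move: (st2 _ _ du dpos).
  by apply: sub_has => x /=; rewrite ltrD2r.
- move=> d t /dnodes_unctr_inv [[[l ts] lts ->]|[z ->]] // u /=.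
  case=> [<- i j ji /= iS|/List.in_map_iff [w [<- wts]]]; first lia.
  rewrite dleaves_unctr prefix_cond_subr -PoszD addn1.
  exact: st3 _ _ (In_snodes_child lts wts).
Qed.

Lemma decorated_unctrE S : decorated (unctr S) <-> sticky S.
Proof.
by split; [apply: sticky_of_decorated_unctr | apply: decorated_unctr_of_sticky].
Qed.

Lemma in_S_ctr n R : in_RS n R -> in_S n (ctr R).
Proof.
case=> lf nI nL dec.
have ctrK : unctr (ctr R) = R by apply: unctr_ctr => //; rewrite nI nL.
split; first by rewrite -decorated_unctrE ctrK.
by rewrite /n_edges size_snodes -ninternal_unctr ctrK -n_internalE nI.
Qed.

Lemma in_RS_unctr n S : in_S n S -> in_RS n (unctr S).
Proof.
case=> st nE; have size_S : stree_size S = n.+1.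
  by rewrite -nE /n_edges size_snodes; case: S {st nE}.
split; first exact: first_child_leaf_unctr.
- by rewrite n_internalE ninternal_unctr.
- by rewrite /n_leaves size_dleaves_unctr.
- exact/decorated_unctrE.
Qed.

Theorem proposition4p2 (n : nat) : (1 <= n)%N ->
  (forall R : dtree,
     first_child_leaf R -> n_internal R = n.+1 -> n_leaves R = n.+1 ->
     (decorated R <-> sticky (ctr R))) /\
  (forall R : dtree, in_RS n R -> in_S n (ctr R)) /\
  (forall R1 R2 : dtree, in_RS n R1 -> in_RS n R2 -> ctr R1 = ctr R2 -> R1 = R2) /\
  (forall S : stree, in_S n S -> exists R : dtree, in_RS n R /\ ctr R = S).
Proof.
move=> _.
have ctrK R : first_child_leaf R -> n_internal R = n.+1 -> n_leaves R = n.+1 ->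
    unctr (ctr R) = R.
  by move=> lf nI nL; apply: unctr_ctr => //; rewrite nI nL.
split; [|split; [|split]].
- by move=> R lf nI nL; rewrite -decorated_unctrE ctrK.
- exact: in_S_ctr.
- move=> R1 R2 [lf1 nI1 nL1 _] [lf2 nI2 nL2 _] E.
  by rewrite -(ctrK R1) // -(ctrK R2) // E.
- by move=> S SS; exists (unctr S); split; [exact: in_RS_unctr | exact: unctrK].
Qed.
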